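(* Let $\Sigma=\{f(x_1,x_1)\approx x_1\}$. Then for all $r,t,u\in W_\tau(X)$, $\Sigma\models Sr(t^\Sigma(r\leftarrow u))\approx Sr(t)^\Sigma(r\leftarrow u)$, where $Sr(v)$ denotes the normal form of $v$ under $\rightarrow_S$ (relative to $\Sigma$).
   Context: Type $\tau=(2)$: one binary symbol $f$; $W_\tau(X)$ terms over $X=\{x_1,x_2,\dots\}$. $\Sigma\models t\approx s$: every groupoid satisfying $\Sigma$ satisfies $t\approx s$. Positions $Pos(t)\subseteq\{1,2\}^*$ (root $\varepsilon$, children $p1,p2$); $sub_t(p)$ subterm at $p$; $\preceq$ prefix order, $\prec$ proper prefix; $t(p;r)$ replaces the subterm at $p$ by $r$. $\Sigma$-composition: $P_r^t$ is the set of $\preceq$-minimal elements of $\{p\in Pos(t)\mid\Sigma\models sub_t(p)\approx r\}$; $t^\Sigma(r\leftarrow u)=t$ if $P_r^t=\emptyset$, else $t$ with the subterms at all positions of $P_r^t$ replaced by $u$. Reducible pairs $Rd(t,\Sigma)$: (A) $(p,q)\in Rd(t,\Sigma)$ if (i) $p\prec q$ and $\Sigma\models sub_t(p)\approx sub_t(q)$; (ii) for every $p'\prec p$ and every $p''$ with $p'\prec p''$, $\Sigma\not\models sub_t(p')\approx sub_t(p'')$; (iii) for every $q'$ with $q\prec q'$, $\Sigma\not\models sub_t(p)\approx sub_t(q')$. (B) $(qp',qq')\in Rd(t,\Sigma)$ whenever $(p,q)\in Rd(t,\Sigma)$ and $(p',q')\in Rd(sub_t(q),\Sigma)$. $t\rightarrow_S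 r$ iff $r=t(p;sub_t(q))$ for some $(p,q)\in Rd(t,\Sigma)$; a normal form is a term obtained by finitely many such steps admitting no further step. *)

From Stdlib Require Import List ClassicalEpsilon.
Import ListNotations.

(* Terms of type tau = (2) over X = {x_0, x_1, ...} (variables indexed by nat). *)
Inductive term : Type :=
| V : nat -> term
| F : term -> term -> term.

(* Directions 1 and 2; positions are words over {1,2}, root = []. *)
Inductive dir : Type := D1 | D2.
Definition pos := list dir.

Fixpoint eval {G : Type} (m : G -> G -> G) (v : nat -> G) (t : term) : G :=
  match t with
  | V n => v n
  | F a b => m (eval m v a) (eval m v b)
  end.

Definition satisfies_Sigma {G : Type} (m : G -> G -> G) : Prop :=
  forall x : G, m x x = x.

Definition Sigma_models (s t : term) : Prop :=
  forall (G : Type) (m : G -> G -> G), satisfies_Sigma m ->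
    forall v : nat -> G, eval m v s = eval m v t.

(* sub_t(p); None iff p is not in Pos(t). *)
Fixpoint subt (t : term) (p : pos) : option term :=
  match p with
  | [] => Some t
  | d :: p' =>
      match t with
      | V _ => None
      | F a b => subt (match d with D1 => a | D2 => b end) p'
      end
  end.

Definition prefix (p q : pos) : Prop := exists w, q = p ++ w.
Definition sprefix (p q : pos) : Prop := exists w, w <> [] /\ q = p ++ w.

Fixpoint replace (t : term) (p : pos) (s : term) : term :=
  match p with
  | [] => s
  | d :: p' =>
      match t with
      | V _ => t
      | F a b =>
          match d with
          | D1 => F (replace a p' s) b
          | D2 => F a (replace b p' s)
          end
      end
  end.

Definition Pset (t r : term) (p : pos) : Prop :=
  exists s, subt t p = Some s /\ Sigma_models s r.

Definition Pmin (t r : term) (p : pos) : Prop :=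
  Pset t r p /\ forall p', sprefix p' p -> ~ Pset t r p'.

Fixpoint repl_set (P : pos -> Prop) (t u : term) : term :=
  if excluded_middle_informative (P []) then u
  else match t with
       | V n => V n
       | F a b => F (repl_set (fun p => P (D1 :: p)) a u)
                    (repl_set (fun p => P (D2 :: p)) b u)
       end.

Definition comp (t r u : term) : term := repl_set (Pmin t r) t u.

Inductive Rd : term -> pos -> pos -> Prop :=
| RdA : forall t p q sp sq,
    sprefix p q ->
    subt t p = Some sp -> subt t q = Some sq -> Sigma_models sp sq ->
    (forall p' p'' s' s'', sprefix p' p -> sprefix p' p'' ->
       subt t p' = Some s' -> subt t p'' = Some s'' -> ~ Sigma_models s' s'') ->
    (forall q' s', sprefix q q' -> subt t q' = Some s' -> ~ Sigma_models sp s') ->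
    Rd t p q
| RdB : forall t p q sq p' q',
    Rd t p q -> subt t q = Some sq -> Rd sq p' q' ->
    Rd t (q ++ p') (q ++ q').

Definition stepS (t r : term) : Prop :=
  exists p q s, Rd t p q /\ subt t q = Some s /\ r = replace t p s.

Inductive starS : term -> term -> Prop :=
| starS_refl : forall t, starS t t
| starS_step : forall t s r, stepS t s -> starS s r -> starS t r.

Definition normal_form (v n : term) : Prop :=
  starS v n /\ forall m, ~ stepS n m.

From Stdlib Require Import List ClassicalEpsilon.
Import ListNotations.

(* Sigma = { f(x,x) = x } axiomatises idempotent groupoids, whose
   word problem is solved by the normal form [idem_nf]: rewrite f(a,a) -> a
   bottom-up.  Evaluating in the term model whose operation is [idem_op]
   (f(a,b) := a if a = b, else F a b) shows that Sigma |= s = t iff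
   idem_nf s = idem_nf t.  Consequently:
   - every ->_S step replaces a subterm by a Sigma-equivalent one, so a term
     is Sigma-equivalent to each of its normal forms (the particular shape of
     the reducible pairs Rd is irrelevant);
   - Sigma-composition respects Sigma-equivalence of its first argument, by
     induction on the term, computing composition at the root and at an
     application node.
   The theorem follows: Sr(t^Sigma(r<-u)) ~ t^Sigma(r<-u) ~ Sr(t)^Sigma(r<-u). *)

Definition term_eq_dec (a b : term) : {a = b} + {a <> b}.
Proof. decide equality; apply PeanoNat.Nat.eq_dec. Defined.

Definition idem_op (a b : term) : term := if term_eq_dec a b then a else F a b.

Fixpoint idem_nf (t : term) : term :=
  match t with
  | V n => V n
  | F a b => idem_op (idem_nf a) (idem_nf b)
  end.

Lemma idem_op_diag : forall a, idem_op a a = a.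
Proof. intro a; unfold idem_op; destruct (term_eq_dec a a); congruence. Qed.

Lemma idem_op_neq : forall a b, a <> b -> idem_op a b = F a b.
Proof. intros a b H; unfold idem_op; destruct (term_eq_dec a b); congruence. Qed.

Lemma idem_nf_idem : forall t, idem_nf (idem_nf t) = idem_nf t.
Proof.
  induction t as [n|a IHa b IHb]; simpl; auto.
  destruct (term_eq_dec (idem_nf a) (idem_nf b)) as [e|e].
  - rewrite e, idem_op_diag; apply IHb.
  - rewrite idem_op_neq by exact e. simpl. rewrite IHa, IHb. apply idem_op_neq, e.
Qed.

Lemma eval_idem_op : forall t, eval idem_op V t = idem_nf t.
Proof. induction t; simpl; congruence. Qed.

Lemma eval_idem_nf : forall G (m : G -> G -> G), satisfies_Sigma m ->
  forall v t, eval m v t = eval m v (idem_nf t).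
Proof.
  intros G m Hm v t; induction t as [n|a IHa b IHb]; simpl; auto.
  destruct (term_eq_dec (idem_nf a) (idem_nf b)) as [e|e].
  - rewrite e, idem_op_diag, IHa, IHb, e; apply Hm.
  - rewrite idem_op_neq by exact e. simpl; congruence.
Qed.

Lemma Sigma_models_iff : forall s t, Sigma_models s t <-> idem_nf s = idem_nf t.
Proof.
  split.
  - intro H. rewrite <- !eval_idem_op. apply H. exact idem_op_diag.
  - intros H G m Hm v. rewrite (eval_idem_nf G m Hm v s), (eval_idem_nf G m Hm v t), H.
    reflexivity.
Qed.

Lemma subt_app : forall p t q, subt t (p ++ q) =
  match subt t p with Some s => subt s q | None => None end.
Proof.
  induction p as [|d p IH]; intros t q.
  - destruct t; reflexivity.
  - destruct t as [n|a b]; simpl; [reflexivity | destruct d; apply IH].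
Qed.

Lemma Rd_Sigma_equiv : forall t p q, Rd t p q ->
  exists sp sq, subt t p = Some sp /\ subt t q = Some sq /\ Sigma_models sp sq.
Proof.
  induction 1 as [t p q sp sq _ Hp Hq Hpq _ _ | t p q sq p' q' _ _ Hq _ [a [b [Ha [Hb Hab]]]]].
  - eauto.
  - exists a, b. rewrite !subt_app, Hq. auto.
Qed.

Lemma replace_Sigma_equiv : forall p t s s', subt t p = Some s -> Sigma_models s s' ->
  Sigma_models t (replace t p s').
Proof.
  induction p as [|d p IH]; intros t s s' Hs H; simpl in Hs.
  - assert (t = s) as -> by (destruct t; injection Hs; auto).
    destruct s; exact H.
  - destruct t as [n|a b]; [discriminate|].
    intros G m Hm v; destruct d; simpl;
      [rewrite (IH a s s' Hs H G m Hm v) | rewrite (IH b s s' Hs H G m Hm v)];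
      reflexivity.
Qed.

Lemma stepS_Sigma_equiv : forall t s, stepS t s -> Sigma_models t s.
Proof.
  intros t s (p & q & s0 & HR & Hq & ->).
  destruct (Rd_Sigma_equiv _ _ _ HR) as (a & b & Ha & Hb & Hab).
  rewrite Hq in Hb; injection Hb as <-.
  exact (replace_Sigma_equiv p t a s0 Ha Hab).
Qed.

Lemma starS_Sigma_equiv : forall t n, starS t n -> Sigma_models t n.
Proof.
  induction 1 as [t | t s n Hstep _ IH].
  - intros G m Hm v; reflexivity.
  - intros G m Hm v. rewrite (stepS_Sigma_equiv t s Hstep G m Hm v). apply IH, Hm.
Qed.

Lemma repl_set_ext : forall t (P Q : pos -> Prop) u, (forall p, P p <-> Q p) ->
  repl_set P t u = repl_set Q t u.
Proof.
  induction t as [n|a IHa b IHb]; intros P Q u H; simpl;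
    destruct (excluded_middle_informative (P [])) as [h1|h1];
    destruct (excluded_middle_informative (Q [])) as [h2|h2];
    try reflexivity; try (exfalso; firstorder; fail).
  f_equal; [apply IHa | apply IHb]; intro p; apply H.
Qed.

Lemma comp_root : forall t r u, idem_nf t = idem_nf r -> comp t r u = u.
Proof.
  intros t r u H. assert (Hroot : Pmin t r []).
  { split.
    - exists t. split; [destruct t; reflexivity | apply Sigma_models_iff, H].
    - intros p' [w [Hw E]]. destruct p'; simpl in E; [subst; contradiction | discriminate]. }
  unfold comp; destruct t; simpl;
    destruct (excluded_middle_informative _); solve [reflexivity | contradiction].
Qed.

Lemma Pmin_child : forall a b r d p, idem_nf (F a b) <> idem_nf r ->
  (Pmin (F a b) r (d :: p) <-> Pmin (match d with D1 => a | D2 => b end) r p).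
Proof.
  intros a b r d p Hn. unfold Pmin, Pset; simpl. split.
  - intros [H1 H2]. split; [exact H1|]. intros p' [w [Hw E]] H3.
    apply (H2 (d :: p')); [exists w; split; [exact Hw | simpl; rewrite E; reflexivity] | exact H3].
  - intros [H1 H2]. split; [exact H1|]. intros p' [w [Hw E]] H3.
    destruct p' as [|d' p'].
    + destruct H3 as [s [Hs Hm]]. injection Hs as <-. apply Hn, Sigma_models_iff, Hm.
    + injection E as -> E. apply (H2 p'); [exists w; auto | exact H3].
Qed.

Lemma comp_F : forall a b r u, idem_nf (F a b) <> idem_nf r ->
  comp (F a b) r u = F (comp a r u) (comp b r u).
Proof.
  intros a b r u H. unfold comp; simpl.
  destruct (excluded_middle_informative _) as [[[s [Hs Hm]] _]|_].
  - injection Hs as <-. exfalso; apply H, Sigma_models_iff, Hm.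
  - f_equal; apply repl_set_ext; intro p;
      [apply (Pmin_child a b r D1 p H) | apply (Pmin_child a b r D2 p H)].
Qed.

Lemma comp_idem_nf : forall t r u,
  idem_nf (comp t r u) = idem_nf (comp (idem_nf t) r u).
Proof.
  induction t as [n|a IHa b IHb]; intros r u; [reflexivity|].
  destruct (term_eq_dec (idem_nf (F a b)) (idem_nf r)) as [e|e].
  - rewrite comp_root, comp_root by (rewrite ?idem_nf_idem; exact e). reflexivity.
  - rewrite comp_F by exact e. simpl. rewrite IHa, IHb.
    simpl in e. destruct (term_eq_dec (idem_nf a) (idem_nf b)) as [h|h].
    + rewrite h, !idem_op_diag. reflexivity.
    + rewrite (idem_op_neq _ _ h) in e |- *.
      rewrite comp_F; [reflexivity|].
      (* F (idem_nf a) (idem_nf b) is the normal form of F a b, hence normal. *)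
      assert (Hnormal : idem_nf (F (idem_nf a) (idem_nf b)) = F (idem_nf a) (idem_nf b))
        by (simpl; rewrite !idem_nf_idem; apply idem_op_neq, h).
      rewrite Hnormal; exact e.
Qed.

Lemma comp_Sigma_congr : forall t t' r u, Sigma_models t t' ->
  Sigma_models (comp t r u) (comp t' r u).
Proof.
  intros t t' r u H. apply (proj1 (Sigma_models_iff _ _)) in H. apply (proj2 (Sigma_models_iff _ _)).
  rewrite (comp_idem_nf t), (comp_idem_nf t'), H. reflexivity.
Qed.

Theorem lemma5p1 : forall (r t u n1 n2 : term),
  normal_form (comp t r u) n1 ->
  normal_form t n2 ->
  Sigma_models n1 (comp n2 r u).
Proof.
  intros r t u n1 n2 [H1 _] [H2 _].
  apply starS_Sigma_equiv in H1. apply starS_Sigma_equiv in H2.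
  apply (comp_Sigma_congr _ _ r u) in H2.
  intros G m Hm v. rewrite <- (H1 G m Hm v). apply H2, Hm.
Qed.
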